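(* Let $\sigma$ be a convex polytope in a Euclidean vector space $\mathbb{E}$ and let $D\subseteq\mathbb{E}$ be a finite set which is sufficiently rich for $\sigma$. For a vertex $v$ of $\sigma$ let $E_v=\{w-v \mid w \text{ a vertex of }\sigma,\ w\neq v\}$. Then for every point $x\in Z(D)$ there is a vertex $v$ of $\sigma$ such that $x+Z(E_v)\subseteq Z(D)$. In particular $Z(D)$ contains a parallel translate of $\sigma$ that contains $x$.
   Context: For a finite set $D\subseteq\mathbb{E}$, the zonotope $Z(D)=\sum_{z\in D}[0,z]$ is the Minkowski sum of the segments $[0,z]$. $D$ is sufficiently rich for a polytope $\sigma$ if $w-v\in D$ for any two distinct vertices $v,w$ of $\sigma$. *)

(* The Euclidean space E is modelled as 'rV[R]_n over an
   arbitrary real field R (the statement is affine/convex, so no inner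
   product is needed). *)
From HB Require Import structures.
From mathcomp Require Import all_boot all_order all_algebra.
Set Implicit Arguments. Unset Strict Implicit. Unset Printing Implicit Defensive.
Import Order.TTheory GRing.Theory Num.Theory.
Local Open Scope ring_scope.

Section Defs.
Variables (R : realFieldType) (n : nat).
Local Notation E := 'rV[R]_n.

Definition conv (S : seq E) (x : E) : Prop :=
  exists l : 'I_(size S) -> R,
    (forall i, 0 <= l i) /\ \sum_i l i = 1 /\ x = \sum_i l i *: S`_i.

Definition is_polytope (sigma : E -> Prop) : Prop :=
  exists S : seq E, S != [::] /\ forall x, sigma x <-> conv S x.

Definition is_vertex (sigma : E -> Prop) (v : E) : Prop :=
  sigma v /\
  forall a b : E, sigma a -> sigma b ->
    forall t : R, 0 < t < 1 -> v = (1 - t) *: a + t *: b -> a = b.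

(* Zonotope Z(P) of a finite set P (given as a predicate): the Minkowski
   sum of the segments [0,z], z in P.  The sum ranges over a duplicate-free
   enumeration s of P.  (Empty if P is infinite; only used on finite P.) *)
Definition zonotope (P : E -> Prop) (x : E) : Prop :=
  exists s : seq E, uniq s /\ (forall z, z \in s <-> P z) /\
    exists t : E -> R, (forall z, 0 <= t z <= 1) /\
      x = \sum_(z <- s) t z *: z.

Definition suff_rich (D : seq E) (sigma : E -> Prop) : Prop :=
  forall v w, is_vertex sigma v -> is_vertex sigma w -> v != w -> w - v \in D.

Definition edge_dirs (sigma : E -> Prop) (v : E) (z : E) : Prop :=
  exists w, is_vertex sigma w /\ w <> v /\ z = w - v.

End Defs.

(* Write x = sum_(d in D) t_d d with 0 <= t_d <= 1 and let t_(w - v) weigh the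
   edge v -> w between two vertices of sigma.  If no vertex is a sink, following
   edges of positive weight yields a directed cycle; its edge vectors sum to 0,
   so subtracting a multiple of the cycle from t represents the same x and kills
   a coefficient.  Hence some representation of x has a sink v, and adding a
   point of Z(E_v) to x only raises coefficients that vanish.  As sigma is the
   convex hull of its vertices, y - v lies in Z(E_v) for every y in sigma. *)

From HB Require Import structures.
From mathcomp Require Import all_boot all_order all_algebra.
From mathcomp Require Import lra.
From Stdlib Require Import Classical.
Import Order.TTheory GRing.Theory Num.Theory.
Set Implicit Arguments. Unset Strict Implicit. Unset Printing Implicit Defensive.
Local Open Scope ring_scope.

Lemma periodic_point (T : finType) (f : T -> T) (x : T) :
  exists u, exists2 p, (0 < p)%N & iter p f u = u.
Proof.
have /trajectP[i lt_i_ord iter_order_i] := looping_order f x.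
exists (iter i f x), (order f x - i)%N; first by rewrite subn_gt0.
by rewrite -iterD subnK ?(ltnW lt_i_ord).
Qed.

Lemma count_lt_in (T : eqType) (a b : pred T) (s : seq T) (x : T) :
  {in s, forall y, a y -> b y} -> x \in s -> b x -> ~~ a x ->
  (count a s < count b s)%N.
Proof.
move=> ab xs bx nax.
have <- : count (predI a b) s = count a s.
  by apply: eq_in_count => y ys /=; apply/andb_idr/ab.
have := count_predC a (filter b s); rewrite size_filter !count_filter => <-.
rewrite -[X in (X < _)%N]addn0 ltn_add2l -has_count.
by apply/hasP; exists x => //=; rewrite nax bx.
Qed.

Lemma big_seq_subset (T : eqType) (W : nmodType) (r1 r2 : seq T) (F : T -> W) :
  uniq r1 -> uniq r2 -> {subset r1 <= r2} ->
  \sum_(z <- r2 | z \in r1) F z = \sum_(z <- r1) F z.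
Proof.
move=> u1 u2 s12; rewrite -big_filter; apply/perm_big/uniq_perm => //.
  exact: filter_uniq.
by move=> z; rewrite mem_filter andb_idr //; apply: s12.
Qed.

Lemma big_pred1_seq (T : eqType) (W : nmodType) (r : seq T) x (F : T -> W) :
  uniq r -> x \in r -> \sum_(z <- r | z == x) F z = F x.
Proof. by move=> ur xr; rewrite -big_filter filter_pred1_uniq // big_seq1. Qed.

Lemma ler_sum_mem (R : numDomainType) (T : eqType) (r : seq T) (F : T -> R) z :
  (forall w, 0 <= F w) -> z \in r -> F z <= \sum_(w <- r) F w.
Proof. by move=> F0 zr; rewrite (big_rem z) //= lerDl sumr_ge0. Qed.

Lemma convex_eq1 (R : realFieldType) (t a b : R) : 0 < t < 1 -> a <= 1 -> b <= 1 ->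
  (1 - t) * a + t * b = 1 -> a = 1 /\ b = 1.
Proof. by move=> /andP[t_gt0 t_lt1] a_le1 b_le1 e; split; nra. Qed.

Lemma sum_fiber_count_scale (R : pzRingType) (V : lmodType R) (I : finType)
    (s : seq V) (e : I -> V) :
  uniq s -> (forall j, e j \in s) ->
  \sum_(d <- s) (\sum_j ((e j == d)%:R : R)) *: d = \sum_j e j.
Proof.
move=> us es; under eq_bigr do rewrite scaler_suml.
rewrite exchange_big; apply: eq_bigr => j _.
rewrite (eq_bigr (fun d => if d == e j then d else 0)); last first.
  by move=> d _; rewrite eq_sym; case: eqP; rewrite ?scale1r ?scale0r.
by rewrite -big_mkcond big_pred1_seq.
Qed.

Section CycleCancellation.
Variables (R : realFieldType) (V : lmodType R) (sD : seq V).
Hypothesis uniq_sD : uniq sD.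

Definition unit_coefs (t : V -> R) := forall d, 0 <= t d <= 1.

Local Notation combo t := (\sum_(d <- sD) t d *: d).
Local Notation supp_size t := (count (fun d => t d != 0) sD).

(* Subtract the largest multiple of the cycle [e] that keeps [t] nonnegative. *)
Lemma cancel_zero_sum (I : finType) (j0 : I) (e : I -> V) (t : V -> R) :
  unit_coefs t -> (forall j, e j \in sD) -> (forall j, 0 < t (e j)) ->
  \sum_j e j = 0 ->
  exists t', [/\ unit_coefs t', combo t' = combo t & (supp_size t' < supp_size t)%N].
Proof.
move=> t01 eD te_gt0 sum_e0.
have t_ge0 d : 0 <= t d by case/andP: (t01 d).
pose m d := \sum_j ((e j == d)%:R : R).
have m_ge0 d : 0 <= m d by apply: sumr_ge0 => j _; rewrite ler0n.
have m_gt0 j : 0 < m (e j).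
  by rewrite /m (bigD1 j) //= eqxx ltr_pwDl // sumr_ge0 // => i _; rewrite ler0n.
have m_eq0 d : (forall j, e j != d) -> m d = 0.
  by move=> ned; apply: big1 => j _; rewrite (negbTE (ned j)).
have [jm _ min_jm] := arg_minP (fun j => t (e j) / m (e j)) (erefl (predT j0)).
pose eps := t (e jm) / m (e jm).
have eps_ge0 : 0 <= eps by rewrite divr_ge0 // ltW.
exists (fun d => t d - eps * m d); split.
- move=> d; apply/andP; split; last first.
    by rewrite (le_trans _ (proj2 (andP (t01 d)))) // lerBlDr lerDl mulr_ge0.
  rewrite subr_ge0; case: (pickP (fun j => e j == d)) => [j /eqP <- | ned].
    by rewrite -ler_pdivlMr // min_jm.
  by rewrite m_eq0 ?mulr0 // => j; rewrite ned.
- under eq_bigr do rewrite scalerBl -scalerA.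
  by rewrite sumrB -scaler_sumr sum_fiber_count_scale // sum_e0 scaler0 subr0.
- apply: (@count_lt_in _ _ _ _ (e jm)) => //.
  + move=> d _; apply: contraNN => /eqP td0; have -> : m d = 0.
      apply: m_eq0 => j; apply: contraTN (te_gt0 j) => /eqP ->.
      by rewrite td0 ltxx.
    by rewrite td0 mulr0 subr0.
  + by rewrite gt_eqF.
  + by rewrite negbK /eps divfK ?subrr // gt_eqF.
Qed.

Variables (T : finType) (i0 : T) (vt : T -> V).
Hypothesis edges_in_sD : forall i j, i != j -> vt j - vt i \in sD.

(* [t] assigns weight [t (vt j - vt i)] to the edge from [i] to [j]. *)
Definition sink (t : V -> R) (i : T) := forall j, j != i -> t (vt j - vt i) = 0.

Lemma reduce_support (t : V -> R) :
  unit_coefs t -> ~ (exists i, sink t i) ->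
  exists t', [/\ unit_coefs t', combo t' = combo t & (supp_size t' < supp_size t)%N].
Proof.
move=> t01 no_sink.
pose out i j := (j != i) && (t (vt j - vt i) != 0).
pose next i := odflt i [pick j | out i j].
have out_next i : out i (next i).
  rewrite /next; case: pickP => [j //| no_out]; case: no_sink; exists i => j ji.
  by apply/eqP; move: (no_out j); rewrite /out ji => /negbT; rewrite negbK.
have [u [p p_gt0 cyc]] := periodic_point next i0.
pose e (j : 'I_p) := vt (iter j.+1 next u) - vt (iter j next u).
apply: (@cancel_zero_sum _ (Ordinal p_gt0) e) => // [j|j|].
- by apply: edges_in_sD; rewrite eq_sym; case/andP: (out_next (iter j next u)).
- rewrite lt_def; case/andP: (out_next (iter j next u)) => _ -> /=.
  by case/andP: (t01 (e j)).
- rewrite -(big_mkord xpredT (fun j => vt (iter j.+1 next u) - vt (iter j next u))).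
  by rewrite telescope_sumr // cyc subrr.
Qed.

Lemma exists_sink (t : V -> R) : unit_coefs t ->
  exists t', [/\ unit_coefs t', combo t' = combo t & exists i, sink t' i].
Proof.
have [N] := ubnP (supp_size t); elim: N t => // N IH t lt_supp t01.
have [[i sink_i] | no_sink] := classic (exists i, sink t i).
  by exists t; split => //; exists i.
have [t' [t'01 eq_t' lt_t']] := reduce_support t01 no_sink.
have [t'' [t''01 eq_t'' sink_t'']] := IH t' (leq_trans lt_t' lt_supp) t'01.
by exists t''; split; rewrite // eq_t''.
Qed.

End CycleCancellation.

Section ConvexHull.
Variables (R : realFieldType) (V : lmodType R).

Definition in_hull (T : seq V) (y : V) := exists f : V -> R,
  [/\ forall z, 0 <= f z, \sum_(z <- T) f z = 1 & y = \sum_(z <- T) f z *: z].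

Lemma in_hull_nil y : ~ in_hull [::] y.
Proof. by case=> f [_]; rewrite big_nil => /eqP; rewrite eq_sym oner_eq0. Qed.

Lemma combination_weight1 (T : seq V) (f : V -> R) z :
  z \in T -> (forall w, 0 <= f w) -> \sum_(w <- T) f w = 1 -> f z = 1 ->
  \sum_(w <- T) f w *: w = z.
Proof.
move=> zT f_ge0; rewrite (big_rem z) //= => sum1 fz1.
have /eqP : \sum_(w <- rem z T) f w = 0 by apply: (addrI 1); rewrite -fz1 sum1 addr0.
rewrite psumr_eq0 // => /allP rest0.
rewrite (big_rem z) //= fz1 scale1r big1_seq ?addr0 // => w /andP[_ wT].
by move/eqP: (rest0 w wT) => ->; rewrite scale0r.
Qed.

Lemma in_hull_rem (T : seq V) s y :
  s \in T -> in_hull (rem s T) s -> in_hull T y -> in_hull (rem s T) y.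
Proof.
move=> sT [g [g_ge0 g1 gs]] [f [f_ge0 f1 fy]].
exists (fun z => f z + f s * g z); split.
- by move=> z; rewrite addr_ge0 // mulr_ge0.
- by rewrite big_split /= -mulr_sumr g1 mulr1 addrC -f1 [RHS](big_rem s).
- under eq_bigr do rewrite scalerDl -scalerA.
  by rewrite big_split /= -scaler_sumr -gs addrC fy [LHS](big_rem s).
Qed.

Lemma in_hull_split (T : seq V) (f : V -> R) z :
  z \in T -> (forall w, 0 <= f w) -> \sum_(w <- T) f w = 1 -> f z != 1 ->
  exists2 r, in_hull (rem z T) r &
    \sum_(w <- T) f w *: w = (1 - f z) *: r + f z *: z.
Proof.
move=> zT f_ge0 f1 fz_neq1.
have sum_rest : \sum_(w <- rem z T) f w = 1 - f z.
  by rewrite -f1 [in RHS](big_rem z) //= addrC addrK.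
have rest_gt0 : 0 < 1 - f z.
  by rewrite lt_neqAle eq_sym subr_eq0 eq_sym fz_neq1 -sum_rest sumr_ge0.
exists ((1 - f z)^-1 *: \sum_(w <- rem z T) f w *: w).
  exists (fun w => f w / (1 - f z)); split.
  - by move=> w; rewrite divr_ge0 // ltW.
  - by rewrite -mulr_suml sum_rest divff // gt_eqF.
  - by rewrite scaler_sumr; apply: eq_bigr => w _; rewrite scalerA mulrC.
by rewrite scalerA divff ?gt_eqF // scale1r (big_rem z) //= addrC.
Qed.

End ConvexHull.

Section Polytope.
Variables (R : realFieldType) (n : nat).
Local Notation E := 'rV[R]_n.
Implicit Types (S T : seq E) (sigma : E -> Prop).

Lemma mem_conv S s : s \in S -> conv S s.
Proof.
move=> sS; pose i0 : 'I_(size S) := Ordinal (etrans (index_mem s S) sS).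
exists (fun i => (i == i0)%:R); split; [|split].
- by move=> i; rewrite ler0n.
- by rewrite (bigD1 i0) //= eqxx big1 ?addr0 // => i /negbTE ->.
- rewrite (bigD1 i0) //= eqxx scale1r big1 ?addr0 ?nth_index //.
  by move=> i /negbTE ->; rewrite scale0r.
Qed.

Lemma conv_convex S a b (t : R) : 0 <= t <= 1 ->
  conv S a -> conv S b -> conv S ((1 - t) *: a + t *: b).
Proof.
move=> /andP[t_ge0 t_le1] [l [l_ge0 [l1 ->]]] [l' [l'_ge0 [l'1 ->]]].
exists (fun i => (1 - t) * l i + t * l' i); split; [|split].
- by move=> i; rewrite addr_ge0 // mulr_ge0 // subr_ge0.
- by rewrite big_split /= -!mulr_sumr l1 l'1 !mulr1 subrK.
- rewrite !scaler_sumr -big_split /=; apply: eq_bigr => i _.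
  by rewrite !scalerA -scalerDl.
Qed.

Lemma in_hull_conv S T y :
  (forall z, z \in T -> conv S z) -> in_hull T y -> conv S y.
Proof.
elim: T y => [|z T IH] y T_conv; first by move/in_hull_nil.
case=> f [f_ge0 f1 ->]; have zT : z \in z :: T := mem_head z T.
have [fz1 | fz_neq1] := eqVneq (f z) 1.
  by rewrite (combination_weight1 zT f_ge0 f1 fz1); apply: T_conv.
have [r r_hull ->] := in_hull_split zT f_ge0 f1 fz_neq1.
rewrite /= eqxx in r_hull; apply: conv_convex.
- by rewrite f_ge0 -f1 ler_sum_mem.
- by apply: IH r_hull => w wT; apply: T_conv; rewrite in_cons wT orbT.
- exact: T_conv.
Qed.

Lemma conv_in_hull S x : conv S x -> in_hull (undup S) x.
Proof.
case=> l [l_ge0 [l1 ->]].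
have sum_undup (W : nmodType) (F : 'I_(size S) -> W) :
    \sum_(z <- undup S) \sum_(i : 'I_(size S) | S`_i == z) F i = \sum_i F i.
  under eq_bigr do rewrite big_mkcond /=.
  rewrite exchange_big; apply: eq_bigr => i _.
  rewrite -big_mkcond (eq_bigl (fun z => z == S`_i)) => [|z]; last exact: eq_sym.
  by rewrite (big_pred1_seq (fun _ => F i)) ?undup_uniq ?mem_undup ?mem_nth.
exists (fun z => \sum_(i : 'I_(size S) | S`_i == z) l i); split.
- by move=> z; apply: sumr_ge0.
- by rewrite sum_undup.
- rewrite -sum_undup; apply: eq_bigr => z _; rewrite scaler_suml.
  by apply: eq_bigr => i /eqP ->.
Qed.

Lemma in_hull_rem_nonvertex sigma T s :
  s \in T -> (forall y, sigma y -> in_hull T y) -> sigma s ->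
  ~ is_vertex sigma s -> in_hull (rem s T) s.
Proof.
move=> sT sigma_hull sigma_s not_vertex; apply: NNPP => s_notin.
apply: not_vertex; split => // a b sa sb t t01 s_ab.
have /andP[t_gt0 t_lt1] := t01.
have [f [f_ge0 f1 fa]] := sigma_hull a sa.
have [g [g_ge0 g1 gb]] := sigma_hull b sb.
pose h z := (1 - t) * f z + t * g z.
have h_ge0 z : 0 <= h z by rewrite addr_ge0 // mulr_ge0 // ?subr_ge0 ltW.
have h1 : \sum_(z <- T) h z = 1.
  by rewrite big_split /= -!mulr_sumr f1 g1 !mulr1 subrK.
have hs : \sum_(z <- T) h z *: z = s.
  under eq_bigr do rewrite scalerDl -!scalerA.
  by rewrite big_split /= -!scaler_sumr -fa -gb.
have [hs1 | hs_neq1] := eqVneq (h s) 1.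
  have fs_le1 : f s <= 1 by rewrite -f1 ler_sum_mem.
  have gs_le1 : g s <= 1 by rewrite -g1 ler_sum_mem.
  have [fs1 gs1] := convex_eq1 t01 fs_le1 gs_le1 hs1.
  by rewrite fa gb !(combination_weight1 sT).
have [r r_hull] := in_hull_split sT h_ge0 h1 hs_neq1.
rewrite hs => s_eq; have s_r : s = r.
  apply: (scalerI (_ : 1 - h s != 0)); first by rewrite subr_eq0 eq_sym.
  by rewrite scalerBl scale1r [s in s - _]s_eq addrK.
by case: s_notin; rewrite [X in in_hull _ X]s_r.
Qed.

Lemma exists_hull_of_vertices sigma T :
  uniq T -> (forall z, z \in T -> sigma z) -> (forall y, sigma y -> in_hull T y) ->
  exists Vs, [/\ uniq Vs, forall z, z \in Vs -> is_vertex sigma z &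
                 forall y, sigma y -> in_hull Vs y].
Proof.
have [N] := ubnP (size T); elim: N T => // N IH T size_T uT T_sigma sigma_hull.
have [[s [sT not_vertex]] | all_vertex] :=
  classic (exists s, s \in T /\ ~ is_vertex sigma s); last first.
  exists T; split => // z zT; apply: NNPP => not_vertex.
  by apply: all_vertex; exists z.
apply: (IH (rem s T)).
- by rewrite size_rem // -ltnS prednK //; case: (T) sT.
- exact: rem_uniq.
- by move=> z /mem_rem; apply: T_sigma.
- move=> y sigma_y; apply: in_hull_rem (sigma_hull y sigma_y) => //.
  exact: in_hull_rem_nonvertex (T_sigma s sT) not_vertex.
Qed.

Lemma vertex_mem_hull S sigma T v :
  (forall x, sigma x <-> conv S x) -> (forall z, z \in T -> sigma z) ->
  is_vertex sigma v -> in_hull T v -> v \in T.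
Proof.
move=> sigmaE T_sigma [_ v_extreme] [f [f_ge0 f1 v_sum]].
have /hasP[z zT /= fz_gt0] : has (fun z => true && (0 < f z)) T.
  by rewrite -psumr_neq0 // f1 oner_neq0.
have [fz1 | fz_neq1] := eqVneq (f z) 1; first by rewrite v_sum (combination_weight1 zT).
have [r r_hull] := in_hull_split zT f_ge0 f1 fz_neq1; rewrite -v_sum => vE.
have sigma_r : sigma r.
  by apply/sigmaE/(in_hull_conv _ r_hull) => w /mem_rem /T_sigma /sigmaE.
have fz_lt1 : f z < 1 by rewrite lt_neqAle fz_neq1 -f1 ler_sum_mem.
have r_z : r = z.
  by apply: (v_extreme r z sigma_r (T_sigma z zT) (f z)) vE; rewrite fz_gt0.
by rewrite vE r_z -scalerDl subrK scale1r.
Qed.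

Lemma polytope_vertex_seq sigma : is_polytope sigma ->
  exists Vs, [/\ uniq Vs, Vs != [::], forall z, z \in Vs <-> is_vertex sigma z &
                 forall y, sigma y -> in_hull Vs y].
Proof.
move=> [S [S_neq0 sigmaE]].
have S_sigma z : z \in undup S -> sigma z by rewrite mem_undup => /mem_conv /sigmaE.
have [Vs [uVs Vs_vertex sigma_hull]] := exists_hull_of_vertices (undup_uniq S) S_sigma
  (fun y sigma_y => conv_in_hull (proj1 (sigmaE y) sigma_y)).
exists Vs; split => //.
- case: S S_neq0 sigmaE {S_sigma} => // s S _ sigmaE; apply/eqP => Vs_nil.
  have sigma_s : sigma s by apply/sigmaE/mem_conv/mem_head.
  by have := sigma_hull s sigma_s; rewrite Vs_nil => /in_hull_nil.
- move=> z; split; first exact: Vs_vertex.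
  move=> z_vertex; have [sigma_z _] := z_vertex.
  by apply: (vertex_mem_hull sigmaE _ z_vertex (sigma_hull z sigma_z)) => w /Vs_vertex[].
Qed.

End Polytope.

Section Zonotope.
Variables (R : realFieldType) (n : nat).
Local Notation E := 'rV[R]_n.

Lemma zonotope_translate (P Q : E -> Prop) (s : seq E) (t : E -> R) y :
  uniq s -> (forall z, z \in s <-> P z) -> unit_coefs t ->
  (forall z, Q z -> P z /\ t z = 0) ->
  zonotope Q y -> zonotope P (\sum_(d <- s) t d *: d + y).
Proof.
move=> us sP t01 QP [s' [us' [s'Q [t' [t'01 ->]]]]].
have s's : {subset s' <= s} by move=> z /s'Q /QP[/sP].
exists s; split => //; split => //.
exists (fun d => t d + (if d \in s' then t' d else 0)); split.
- move=> d; case: ifPn => [ds'|_]; last by rewrite addr0.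
  by have [_ ->] := QP d (proj1 (s'Q d) ds'); rewrite add0r.
- under [in RHS]eq_bigr do rewrite scalerDl (fun_if (fun c => c *: _)) scale0r.
  by rewrite big_split /= -big_mkcond big_seq_subset.
Qed.

Lemma in_hull_sub_edge_zonotope (sigma : E -> Prop) (Vs : seq E) v y :
  uniq Vs -> (forall z, z \in Vs <-> is_vertex sigma z) -> in_hull Vs y ->
  zonotope (edge_dirs sigma v) (y - v).
Proof.
move=> uVs VsE [f [f_ge0 f1 ->]].
exists [seq w - v | w <- Vs & w != v]; split.
  by rewrite map_inj_uniq ?filter_uniq //; apply: addIr.
split.
  move=> z; split.
    by case/mapP=> w; rewrite mem_filter => /andP[/eqP w_neq /VsE w_vertex] ->; exists w.
  move=> [w [/VsE wVs [/eqP w_neq ->]]].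
  by apply: map_f; rewrite mem_filter w_neq.
exists (fun z => if z + v \in Vs then f (z + v) else 0); split.
  move=> z; case: ifP => zVs; last by rewrite lexx ler01.
  by rewrite f_ge0 -f1 ler_sum_mem.
rewrite big_map big_filter [RHS]big_mkcond /=.
transitivity (\sum_(w <- Vs) f w *: (w - v)).
  under [in RHS]eq_bigr do rewrite scalerBr.
  by rewrite sumrB -scaler_suml f1 scale1r.
apply: eq_big_seq => w wVs; rewrite subrK wVs.
by case: eqVneq => [->|]; rewrite ?subrr ?scaler0.
Qed.

End Zonotope.

Theorem mainTheorem15 (R : realFieldType) (n : nat)
  (sigma : 'rV[R]_n -> Prop) (D : seq 'rV[R]_n) :
  is_polytope sigma -> suff_rich D sigma ->
  forall x : 'rV[R]_n, zonotope (fun z => z \in D) x ->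
    (exists v, is_vertex sigma v /\
       forall y, zonotope (edge_dirs sigma v) y ->
                 zonotope (fun z => z \in D) (x + y)) /\
    (exists u : 'rV[R]_n, sigma (x - u) /\
       forall y, sigma y -> zonotope (fun z => z \in D) (y + u)).
Proof.
move=> sigma_poly rich x [sD [uD [sDE [t [t01 ->]]]]].
have [Vs [uVs Vs_neq0 VsE sigma_hull]] := polytope_vertex_seq sigma_poly.
have v0Vs : head 0 Vs \in Vs by case: (Vs) Vs_neq0 => // ? ? _; apply: mem_head.
have edges_in_sD (i j : seq_sub Vs) : i != j -> val j - val i \in sD.
  move=> i_neq_j; apply/sDE/rich; rewrite ?(inj_eq val_inj) //; exact/VsE/valP.
have [t' [t'01 <- [i sink_i]]] :=
  exists_sink uD (SeqSub v0Vs) edges_in_sD t01.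
have vertex_i : is_vertex sigma (val i) by apply/VsE/valP.
have add_edges y : zonotope (edge_dirs sigma (val i)) y ->
    zonotope (fun z => z \in D) (\sum_(d <- sD) t' d *: d + y).
  apply: zonotope_translate => // _ [w [w_vertex [w_neq ->]]]; split.
    by apply: rich => //; apply/eqP => w_eq; apply: w_neq.
  have wVs : w \in Vs by apply/VsE.
  by apply: (sink_i (SeqSub wVs)); apply/eqP => w_eq; apply: w_neq; rewrite -w_eq.
split; first by exists (val i).
exists (\sum_(d <- sD) t' d *: d - val i); split; first by rewrite subKr; case: vertex_i.
move=> y sigma_y; rewrite addrCA; apply: add_edges.
exact: in_hull_sub_edge_zonotope uVs VsE (sigma_hull y sigma_y).
Qed.
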